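(* For any finite, simple, connected graph $G$ and any $n\ge 1$, $\gamma_P(G)\le\gamma_P(G\,\Box\,P_n)\le\gamma(G)$. In particular, $\gamma_P(G)\le\gamma_P(G\,\Box\,P_2)\le\min\{\gamma(G),Z(G)\}$, and if $\gamma_P(G)=\gamma(G)$ then $\gamma_P(G\,\Box\,P_n)=\gamma(G)$.
   Context: $P_n$ is the path of order $n$. The Cartesian product $G\,\Box\,H$ has vertex set $V(G)\times V(H)$, with $(g,h)$ adjacent to $(g',h')$ iff either $g=g'$ and $hh'\in E(H)$, or $h=h'$ and $gg'\in E(G)$. $\gamma(G)$ is the domination number. For $U\subseteq V$, $cl(U)$ is obtained by coloring $U$ black and repeatedly applying: if a black vertex has exactly one white neighbor, that neighbor becomes black. $U$ is a zero forcing set if $cl(U)=V$, and $Z(G)$ is the minimum size of a zero forcing set. $S$ is a power dominating set if $cl(N[S])=V$; $\gamma_P$ is the minimum size of a power dominating set. *)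

From mathcomp Require Import all_boot.
Set Implicit Arguments. Unset Strict Implicit. Unset Printing Implicit Defensive.

Definition simple_graph (T : finType) (e : rel T) :=
  symmetric e /\ irreflexive e.

Definition connected_graph (T : finType) (e : rel T) :=
  forall x y : T, connect e x y.

Definition closed_nbhd (T : finType) (e : rel T) (S : {set T}) : {set T} :=
  S :|: [set y | [exists x in S, e x y]].

Definition dominating (T : finType) (e : rel T) (S : {set T}) :=
  closed_nbhd e S == [set: T].

Definition force_step (T : finType) (e : rel T) (B : {set T}) : {set T} :=
  B :|: [set w | [exists v in B,
          [&& e v w, w \notin B &
              [forall u, (e v u && (u \notin B)) ==> (u == w)]]]].

(* cl(U): repeatedly apply the rule; the black set only grows, so it is
   stable after #|T| rounds. *)
Definition cl (T : finType) (e : rel T) (U : {set T}) : {set T} :=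
  iter #|T| (force_step e) U.

Definition zero_forcing (T : finType) (e : rel T) (U : {set T}) :=
  cl e U == [set: T].

Definition power_dominating (T : finType) (e : rel T) (S : {set T}) :=
  cl e (closed_nbhd e S) == [set: T].

(* Minimum size of a set satisfying P (the full vertex set always does
   for the three notions below, so #|T| is a harmless default). *)
Definition min_size (T : finType) (P : {set T} -> bool) : nat :=
  \big[minn/#|T|]_(S : {set T} | P S) #|S|.

Definition domination_number (T : finType) (e : rel T) : nat :=
  min_size (dominating e).
Definition zero_forcing_number (T : finType) (e : rel T) : nat :=
  min_size (zero_forcing e).
Definition power_domination_number (T : finType) (e : rel T) : nat :=
  min_size (power_dominating e).

Definition path_rel (n : nat) : rel 'I_n :=
  fun i j => (i.+1 == j :> nat) || (j.+1 == i :> nat).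

Definition cart_prod (T U : finType) (e : rel T) (f : rel U) : rel (T * U) :=
  fun x y => ((x.1 == y.1) && f x.2 y.2) || ((x.2 == y.2) && e x.1 y.1).

Definition box_path (T : finType) (e : rel T) (n : nat) : rel (T * 'I_n) :=
  cart_prod e (@path_rel n).
Arguments box_path {T} e n.

From mathcomp Require Import all_boot.
Set Implicit Arguments. Unset Strict Implicit. Unset Printing Implicit Defensive.

(** Projecting G □ H onto G turns a power dominating set S of the product into
    the power dominating set [fst @: S] of G: a forcing move in the product
    either stays inside an H-fibre or projects to a forcing move of G.
    Conversely, a dominating set D of G placed on the first layer of G □ P_n
    observes that whole layer, after which every vertex of layer i forces its
    copy in layer i + 1.  In G □ P_2, a zero forcing set W placed on one layer
    observes W on both layers, and the forcing chains of W in G can then be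
    replayed on both layers simultaneously. *)

Section MinSize.

Variable T : finType.
Implicit Type P : {set T} -> bool.

Lemma min_size_le P S : P S -> min_size P <= #|S|.
Proof.
move=> PS; rewrite /min_size.
have : S \in index_enum {set T} by rewrite mem_index_enum.
elim: (index_enum _) => [|A r IH] //=.
rewrite in_cons big_cons => /predU1P [<-|Sr]; first by rewrite PS geq_minl.
by case: (P A); rewrite ?geq_min IH ?orbT.
Qed.

Lemma min_sizeP P : P setT -> exists2 S, P S & min_size P = #|S|.
Proof.
move=> PT; rewrite /min_size.
apply: (big_ind (fun m => exists2 S, P S & m = #|S|)); last by move=> S PS; exists S.
- by exists setT; rewrite ?cardsT.
- move=> _ _ [A PA ->] [B PB ->].
  by case: leqP => _; [exists A | exists B].
Qed.

End MinSize.

Lemma leq_min_size (T U : finType) (P : {set T} -> bool) (Q : {set U} -> bool)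
    (f : T -> U) :
  P setT -> (forall S, P S -> Q (f @: S)) -> min_size Q <= min_size P.
Proof.
move=> PT PQ; have [S PS ->] := min_sizeP PT.
exact: leq_trans (min_size_le (PQ S PS)) (leq_imset_card f S).
Qed.

Section Forcing.

Variables (T : finType) (e : rel T).
Implicit Types A B C U : {set T}.

Definition force_closed (C : {set T}) := force_step e C \subset C.

Lemma force_stepP B w :
  reflect (w \in B \/
           exists2 v, v \in B & e v w /\ forall u, e v u -> u \notin B -> u = w)
          (w \in force_step e B).
Proof.
rewrite !inE; apply: (iffP orP) => [[->|] | [->|[v vB [evw vw_only]]]]; try by left.
  case/existsP=> v /and4P [vB evw _ /forallP vw_only]; right; exists v => //.
  by split=> // u evu uB; move: (vw_only u); rewrite evu uB => /eqP.
have [wB | wB] := boolP (w \in B); [by left | right].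
apply/existsP; exists v; rewrite vB evw /=.
by apply/forallP => u; apply/implyP => /andP [evu uB]; rewrite (vw_only u) ?eqxx.
Qed.

Lemma force_step_ext B : B \subset force_step e B.
Proof. exact: subsetUl. Qed.

Lemma force_stepS A B : A \subset B -> force_step e A \subset force_step e B.
Proof.
move=> AB; apply/subsetP => w /force_stepP [/(subsetP AB) wB | [v /(subsetP AB) vB]].
  by apply/force_stepP; left.
case=> evw vw_only; apply/force_stepP; right; exists v => //.
by split=> // u evu uB; apply: vw_only => //; apply: contra uB; apply: (subsetP AB).
Qed.

Lemma force_closed_mem C v w :
  force_closed C -> v \in C -> e v w ->
  (forall u, e v u -> u \notin C -> u = w) -> w \in C.
Proof.
move=> CC vC evw vw_only; apply: (subsetP CC).
by apply/force_stepP; right; exists v.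
Qed.

Lemma sub_cl U : U \subset cl e U.
Proof.
rewrite /cl; elim: #|T| => [|k IH] //=.
exact: subset_trans IH (force_step_ext _).
Qed.

(* A strictly growing chain of subsets of T cannot have more than #|T| steps. *)
Lemma cl_force_closed U : force_closed (cl e U).
Proof.
rewrite /force_closed /cl; set f := force_step e.
have grow k : f (iter k f U) != iter k f U -> k <= #|iter k f U|.
  elim: k => [|k IH] //= ne.
  have ne' : f (iter k f U) != iter k f U by apply: contra ne => /eqP E; rewrite E E.
  have lt : iter k f U \proper f (iter k f U).
    by rewrite properEneq eq_sym ne' force_step_ext.
  exact: leq_ltn_trans (IH ne') (proper_card lt).
apply: contraT => not_sub.
have ne : f (iter #|T| f U) != iter #|T| f U by apply: contra not_sub => /eqP ->.
have lt : iter #|T| f U \proper f (iter #|T| f U).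
  by rewrite properEneq eq_sym ne force_step_ext.
by have := leq_ltn_trans (grow _ ne) (proper_card lt); rewrite ltnNge max_card.
Qed.

Lemma cl_min U C : U \subset C -> force_closed C -> cl e U \subset C.
Proof.
move=> UC CC; rewrite /cl; elim: #|T| => [|k IH] //=.
exact: subset_trans (force_stepS IH) CC.
Qed.

Lemma clS A B : A \subset B -> cl e A \subset cl e B.
Proof.
by move=> AB; apply: cl_min (cl_force_closed B); apply: subset_trans (sub_cl B).
Qed.

Lemma clT : cl e setT = setT.
Proof. by apply/eqP; rewrite eqEsubset subsetT sub_cl. Qed.

Lemma closed_nbhdT : closed_nbhd e setT = setT.
Proof. exact: setTU. Qed.

Lemma dominatingT : dominating e setT.
Proof. by rewrite /dominating closed_nbhdT. Qed.

Lemma zero_forcingT : zero_forcing e setT.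
Proof. by rewrite /zero_forcing clT. Qed.

Lemma power_dominatingT : power_dominating e setT.
Proof. by rewrite /power_dominating closed_nbhdT clT. Qed.

End Forcing.

Section CartProd.

Variables (T U : finType) (e : rel T) (f : rel U).

Lemma fst_closed_nbhd_cart_prod S :
  fst @: closed_nbhd (cart_prod e f) S \subset closed_nbhd e (fst @: S).
Proof.
apply/subsetP => _ /imsetP [y + ->]; rewrite !inE => /orP [yS|].
  by rewrite imset_f.
case/existsP=> x /andP [xS /orP [/andP [/eqP <- _] | /andP [_ exy]]].
  by rewrite imset_f.
by apply/orP; right; apply/existsP; exists x.1; rewrite imset_f.
Qed.

Lemma force_closed_cart_prod_fst C :
  force_closed e C -> force_closed (cart_prod e f) [set x | x.1 \in C].
Proof.
move=> CC; apply/subsetP => y /force_stepP [//|[x]].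
rewrite !inE => xC [/orP [/andP [/eqP <- _] // | /andP [/eqP x2y2 exy]] xy_only].
apply: (force_closed_mem CC xC exy) => w exw wC.
have := xy_only (w, x.2); rewrite !inE /cart_prod /= eqxx exw orbT.
by move=> /(_ isT wC) <-.
Qed.

Lemma cl_cart_prod_fst B :
  cl (cart_prod e f) B \subset [set x | x.1 \in cl e (fst @: B)].
Proof.
apply: cl_min; last exact/force_closed_cart_prod_fst/cl_force_closed.
by apply/subsetP => x xB; rewrite inE (subsetP (sub_cl _ _)) ?imset_f.
Qed.

Lemma power_dominating_cart_prod_fst (u0 : U) S :
  power_dominating (cart_prod e f) S -> power_dominating e (fst @: S).
Proof.
move=> /eqP PD; apply/eqP/setP => v; rewrite inE.
have : (v, u0) \in cl (cart_prod e f) (closed_nbhd (cart_prod e f) S).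
  by rewrite PD inE.
move=> /(subsetP (cl_cart_prod_fst _)); rewrite inE.
exact/subsetP/clS/fst_closed_nbhd_cart_prod.
Qed.

End CartProd.

Section BoxPath.

Variables (T : finType) (e : rel T).

Lemma box_path_layer0 n (F : {set T * 'I_n.+1}) :
  force_closed (box_path e n.+1) F -> (forall v, (v, ord0) \in F) -> F = setT.
Proof.
move=> FF F0.
suff below i (j : 'I_n.+1) v : j <= i -> (v, j) \in F.
  by apply/setP => -[v j]; rewrite inE (below j).
elim: i j v => [|i IH] j v.
  by rewrite leqn0 => /eqP j0; rewrite (_ : j = ord0) //; apply: val_inj.
rewrite leq_eqVlt ltnS => /orP [/eqP ji | /IH //].
have ilt : i < n.+1 by apply: ltn_trans (ltn_ord j); rewrite ji.
apply: (force_closed_mem (v := (v, Ordinal ilt)) FF).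
- exact: IH (Ordinal ilt) v (leqnn i).
- by rewrite /box_path /cart_prod /path_rel /= eqxx ji eqxx.
move=> [u k]; rewrite /box_path /cart_prod /=.
move=> /orP [/andP [/eqP <- /orP [/eqP ik | /eqP ki]] | /andP [/eqP <- _]].
- by move=> _; congr pair; apply: val_inj; rewrite /= -ik ji.
- by move: ki => /= ki; rewrite IH // -ki leqnSn.
- by rewrite IH.
Qed.

Lemma power_dominating_box_path_layer0 n D :
  dominating e D -> power_dominating (box_path e n.+1) [set (v, ord0) | v in D].
Proof.
move=> /eqP domD; apply/eqP/box_path_layer0; first exact: cl_force_closed.
move=> v; apply: (subsetP (sub_cl _ _)).
have : v \in closed_nbhd e D by rewrite domD inE.
rewrite !inE => /orP [vD | /existsP [u /andP [uD euv]]]; first by rewrite imset_f.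
apply/orP; right; apply/existsP; exists (u, ord0).
by rewrite imset_f //= /box_path /cart_prod /= euv orbT.
Qed.

Lemma power_dominating_box_path2 W :
  zero_forcing e W -> power_dominating (box_path e 2) [set (v, ord0) | v in W].
Proof.
move=> /eqP zfW; rewrite /power_dominating.
set F := cl _ _.
have FF : force_closed (box_path e 2) F := cl_force_closed _ _.
set C := [set v | [forall b, (v, b) \in F]].
have WC : W \subset C.
  apply/subsetP => w wW; rewrite inE; apply/forallP => b.
  apply: (subsetP (sub_cl _ _)); rewrite !inE.
  case: b => -[|[|//]] b2.
    by rewrite (_ : Ordinal b2 = ord0) ?imset_f //; apply: val_inj.
  apply/orP; right; apply/existsP; exists (w, ord0).
  by rewrite imset_f //= /box_path /cart_prod /path_rel /= eqxx.
have CC : force_closed e C.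
  apply/subsetP => v /force_stepP [//|[u]].
  rewrite inE => /forallP uC [euv uv_only]; rewrite inE; apply/forallP => b.
  apply: (force_closed_mem FF (uC b)) => [|[y c]]; rewrite /box_path /cart_prod /=.
    by rewrite eqxx euv orbT.
  move=> /orP [/andP [/eqP <- _] | /andP [/eqP <- euy]] yF.
    by rewrite uC in yF.
  case yC: (y \in C); first by move: yC yF; rewrite inE => /forallP ->.
  by rewrite (uv_only y euy) ?yC.
apply/eqP/setP => -[v b]; rewrite inE.
have : v \in C by rewrite (subsetP (cl_min WC CC)) // zfW inE.
by rewrite inE => /forallP; apply.
Qed.

End BoxPath.

Theorem mainTheorem11 (T : finType) (e : rel T) :
  simple_graph e -> connected_graph e -> 0 < #|T| ->
  (forall n : nat, 1 <= n ->
     power_domination_number e <= power_domination_number (box_path e n)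
     <= domination_number e)
  /\ (power_domination_number e <= power_domination_number (box_path e 2)
      <= minn (domination_number e) (zero_forcing_number e))
  /\ (power_domination_number e = domination_number e ->
      forall n : nat, 1 <= n ->
        power_domination_number (box_path e n) = domination_number e).
Proof.
move=> _ _ _.
have lower n : power_domination_number e <= power_domination_number (box_path e n.+1).
  exact: leq_min_size (power_dominatingT _) (power_dominating_cart_prod_fst ord0).
have upper n : power_domination_number (box_path e n.+1) <= domination_number e.
  exact: leq_min_size (dominatingT e) (@power_dominating_box_path_layer0 _ e n).
have upper_zf : power_domination_number (box_path e 2) <= zero_forcing_number e.
  exact: leq_min_size (zero_forcingT e) (@power_dominating_box_path2 _ e).
split; first by case=> // n _; rewrite lower upper.
split; first by rewrite lower leq_min upper upper_zf.
by move=> pd_eq_d [//|n] _; apply/eqP; rewrite eqn_leq upper -pd_eq_d lower.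
Qed.
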